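(* Let $p_1\ne p_2$ be primes and $a,b>0$ integers, and let $n=p_1^a p_2^b$. Then for every integer $k$ with $1\le k\le n-1$, $\binom{n}{k}$ is divisible by $p_1$ or by $p_2$ (i.e., $n$ satisfies Condition 1 with $p_1$ and $p_2$).
   Context: A positive integer $n$ satisfies Condition 1 with primes $p$ and $q$ if for all integers $k$ with $1\le k\le n-1$ the binomial coefficient $\binom{n}{k}$ is divisible by at least one of $p$ or $q$. *)

From mathcomp Require Import all_boot.
Set Implicit Arguments. Unset Strict Implicit. Unset Printing Implicit Defensive.

Definition condition1 (n p q : nat) : Prop :=
  forall k : nat, 1 <= k -> k <= n - 1 -> (p %| 'C(n, k)) || (q %| 'C(n, k)).

(* Absorption, k * C(n, k) = n * C(n - 1, k - 1), shows that any divisor of n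
   coprime to C(n, k) divides k. So if neither p1 nor p2 divides C(n, k), both
   p1^a and p2^b divide k, hence n = p1^a p2^b divides k: impossible for
   0 < k < n. The exponents need not be positive. *)
From mathcomp Require Import all_boot.

Set Implicit Arguments.
Unset Strict Implicit.
Unset Printing Implicit Defensive.

Lemma coprime_bin_dvdn (d n k : nat) :
  0 < k -> d %| n -> coprime d 'C(n, k) -> d %| k.
Proof.
case: k => [|k] // _ dvd_dn co_d_bin.
by rewrite -(Gauss_dvdl _ co_d_bin) -mul_bin_diag dvdn_mulr.
Qed.

Lemma prime_ndvd_bin_expn_dvdn (p e n k : nat) :
  prime p -> 0 < k -> p ^ e %| n -> ~~ (p %| 'C(n, k)) -> p ^ e %| k.
Proof.
move=> p_pr k_gt0 dvd_n p_ndvd; apply: coprime_bin_dvdn dvd_n _ => //.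
by rewrite coprimeXl // prime_coprime.
Qed.

Theorem mainTheorem4 (p1 p2 a b : nat) :
  prime p1 -> prime p2 -> p1 != p2 -> 0 < a -> 0 < b ->
  condition1 (p1 ^ a * p2 ^ b) p1 p2.
Proof.
move=> p1_pr p2_pr p1_neq_p2 _ _ k k_gt0 le_k_n1.
set n := p1 ^ a * p2 ^ b in le_k_n1 *.
have n_gt0 : 0 < n by rewrite muln_gt0 !expn_gt0 !prime_gt0.
have lt_kn : k < n by rewrite (leq_ltn_trans le_k_n1) // subn1 prednK.
apply/negPn/negP; rewrite negb_or => /andP[ndvd1 ndvd2].
have co12 : coprime (p1 ^ a) (p2 ^ b).
  by rewrite coprimeXl // coprimeXr // prime_coprime // dvdn_prime2.
have : n %| k.
  rewrite Gauss_dvd // (prime_ndvd_bin_expn_dvdn p1_pr k_gt0 _ ndvd1) ?dvdn_mulr //.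
  by rewrite (prime_ndvd_bin_expn_dvdn p2_pr k_gt0 _ ndvd2) ?dvdn_mull.
by move/(dvdn_leq k_gt0); rewrite leqNgt lt_kn.
Qed.
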